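(* In the setting of the anyon theory $\mathcal{T}$ generated by $c_i,\varphi_i$ ($i=1,\dots,M$) with data $N_i,t_i,p_{ij},n_i$ as below, define $\bar\varphi_i=\varphi_i^{-1}c_i^{2n_i/N_i}$ (so $\varphi_i\bar\varphi_i=c_i^{2n_i/N_i}$), $$a_i=\varphi_i\prod_{j=1}^{i}c_j^{p_{ji}N_j/N_{ij}},\qquad \bar a_i=\bar\varphi_i\prod_{j=i}^{M}c_j^{p_{ij}N_j/N_{ij}}.$$ Then $B_\theta(a_i,\bar a_j)=1$ for all $i,j$, and conversely every anyon type $b$ of $\mathcal{T}$ with $B_\theta(b,\bar a_j)=1$ for all $j$ lies in the subgroup generated by $\{a_i\}_{i=1}^M$. That is, the anyon types braiding trivially with all of $\bar{\mathcal{A}}=\langle\bar a_1,\dots,\bar a_M\rangle$ form exactly the subtheory $\mathcal{A}=\langle a_1,\dots,a_M\rangle$.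
   Context: Data: $N_i$ prime powers; $t_i\in\frac12\mathbb{Z}$ if $N_i$ even, $t_i\in\mathbb{Z}$ if $N_i$ odd; integers $p_{ij}=p_{ji}$ for $i\ne j$; $p_{ii}=\lfloor t_i\rfloor$; $N_{ij}=\gcd(N_i,N_j)$; $n_i=0$ if $t_i\in\mathbb{Z}$ and $n_i=N_i/2$ if $t_i\in\frac12+\mathbb{Z}$. $\mathcal{T}$ is the Abelian anyon theory with fusion group freely generated by $c_i,\varphi_i$ subject to $c_i^{N_i}=\varphi_i^{N_i}=1$, with $\theta(xy)=\theta(x)\theta(y)B_\theta(x,y)$, $B_\theta$ symmetric bimultiplicative, and $\theta(c_i)=1$, $\theta(\varphi_i)=e^{2\pi i n_i/N_i^2}$, $B_\theta(c_i,c_j)=1$, $B_\theta(\varphi_i,c_j)=e^{2\pi i\delta_{ij}/N_i}$, $B_\theta(\varphi_i,\varphi_j)=1$ for $i\ne j$. The braiding phase is $B_\theta(a,b)=\theta(ab)/(\theta(a)\theta(b))$. *)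

From HB Require Import structures.
From mathcomp Require Import all_boot all_order all_algebra.
Set Implicit Arguments. Unset Strict Implicit. Unset Printing Implicit Defensive.
Import Order.TTheory GRing.Theory Num.Theory.
Local Open Scope ring_scope.

Definition prime_power (N : nat) : Prop :=
  exists (q k : nat), prime q /\ N = (q ^ k.+1)%N.

(* An anyon type c_1^{x_1} phi_1^{y_1} ... c_M^{x_M} phi_M^{y_M} is represented
   by its exponent vectors (x, y); exponents of c_i, phi_i are taken mod N_i. *)
Definition anyon (M : nat) := (('I_M -> int) * ('I_M -> int))%type.

Definition fuse M (a b : anyon M) : anyon M :=
  (fun j : 'I_M => a.1 j + b.1 j, fun j : 'I_M => a.2 j + b.2 j).

Definition anyon_eq M (N : 'I_M -> nat) (a b : anyon M) : Prop :=
  forall j, (a.1 j = b.1 j %[mod (N j)%:Z])%Z /\ (a.2 j = b.2 j %[mod (N j)%:Z])%Z.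

Definition nn M (N : 'I_M -> nat) (t : 'I_M -> rat) (i : 'I_M) : nat :=
  if t i \is a Num.int then 0%N else ((N i)./2)%N.

(* Phases are written e^{2 pi i r}; we record the exponent r : rat (mod Z).
   theta(prod_i c_i^{x_i} phi_i^{y_i}) = exp(2 pi i theta_exp), the unique
   quadratic refinement with theta(c_i)=1, theta(phi_i)=e^{2 pi i n_i/N_i^2},
   B(c_i,c_j)=1, B(phi_i,c_j)=e^{2 pi i delta_ij/N_i}, B(phi_i,phi_j)=1 (i<>j). *)
Definition theta_exp M (N n : 'I_M -> nat) (a : anyon M) : rat :=
  \sum_(i < M) ((a.1 i * a.2 i)%:~R / (N i)%:R
                + (n i)%:R * (a.2 i ^+ 2)%:~R / ((N i)%:R ^+ 2)).

Definition B_exp M (N n : 'I_M -> nat) (a b : anyon M) : rat :=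
  theta_exp N n (fuse a b) - theta_exp N n a - theta_exp N n b.

Definition B_trivial M (N n : 'I_M -> nat) (a b : anyon M) : Prop :=
  B_exp N n a b \is a Num.int.

(* a_i = phi_i * prod_{j <= i} c_j^{p_{ji} N_j / N_{ij}} *)
Definition a_gen M (N : 'I_M -> nat) (p : 'I_M -> 'I_M -> int) (i : 'I_M) : anyon M :=
  (fun j : 'I_M => if (j <= i)%N then p j i * ((N j %/ gcdn (N i) (N j))%N)%:Z else 0,
   fun j : 'I_M => ((j == i) : nat)%:Z).

(* abar_i = phibar_i * prod_{j >= i} c_j^{p_{ij} N_j / N_{ij}},
   phibar_i = phi_i^{-1} c_i^{2 n_i / N_i} *)
Definition abar_gen M (N n : 'I_M -> nat) (p : 'I_M -> 'I_M -> int) (i : 'I_M)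
  : anyon M :=
  (fun j : 'I_M => (if (i <= j)%N then p i j * ((N j %/ gcdn (N i) (N j))%N)%:Z else 0)
            + (if j == i then (((2 * n i) %/ N i)%N)%:Z else 0),
   fun j : 'I_M => - ((j == i) : nat)%:Z).

Definition lincomb M (g : 'I_M -> anyon M) (k : 'I_M -> int) : anyon M :=
  (fun j : 'I_M => \sum_(i < M) k i * (g i).1 j, fun j : 'I_M => \sum_(i < M) k i * (g i).2 j).

Definition in_subgroup M (N : 'I_M -> nat) (g : 'I_M -> anyon M) (b : anyon M) : Prop :=
  exists k : 'I_M -> int, anyon_eq N b (lincomb g k).

(* Write b = (x, y) for its c- and phi-exponents. The braiding form is
   bilinear, and pairing b with abar_k leaves only the c_k-exponent of
   prod_i a_i^(y_i) minus x_k, over N_k: the c_k^(2 n_k / N_k) correction in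
   abar_k exactly cancels the quadratic phi_k-term. So b braids trivially with
   every abar_k iff its c-exponents agree mod N with those of prod_i a_i^(y_i),
   whose phi-exponents are y; taking b = a_i gives the first half. *)

From mathcomp Require Import all_boot all_algebra.
From mathcomp Require Import ring.
Import GRing.Theory Num.Theory.
Set Implicit Arguments.
Unset Strict Implicit.
Unset Printing Implicit Defensive.
Local Open Scope ring_scope.

Lemma Qint_divn (z : int) (m : nat) : (0 < m)%N ->
  ((z%:~R / m%:R : rat) \is a Num.int) = (m%:Z %| z)%Z.
Proof.
move=> m_gt0; apply/idP/idP => [/intrP [q Hq]|]; last exact: Qint_dvdz.
suff -> : z = q * m%:Z by rewrite dvdz_mull.
by apply: (@intr_inj rat); rewrite intrM -Hq divfK // pnatr_eq0 -lt0n.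
Qed.

Lemma lincomb_unit1 M (g : 'I_M -> anyon M) (i j : 'I_M) :
  (lincomb g (fun l => ((l == i) : nat)%:Z)).1 j = (g i).1 j.
Proof.
rewrite /lincomb /= (bigD1 i) //= eqxx mul1r big1 ?addr0 //.
by move=> l /negPf ->; rewrite mul0r.
Qed.

Lemma lincomb_a_gen2 M (N : 'I_M -> nat) (p : 'I_M -> 'I_M -> int)
    (y : 'I_M -> int) (j : 'I_M) :
  (lincomb (a_gen N p) y).2 j = y j.
Proof.
rewrite /lincomb /= (bigD1 j) //= eqxx mulr1 big1 ?addr0 //.
by move=> i /negPf; rewrite eq_sym => ->; rewrite mulr0.
Qed.

Section Braiding.

Variables (M : nat) (N n : 'I_M -> nat).

Lemma B_expE (a b : anyon M) :
  B_exp N n a b = \sum_(j < M) ((a.1 j * b.2 j + b.1 j * a.2 j)%:~R / (N j)%:R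
     + (2 * n j)%:R * (a.2 j * b.2 j)%:~R / (N j)%:R ^+ 2).
Proof.
rewrite /B_exp /theta_exp -!sumrB; apply: eq_bigr => j _ /=.
rewrite !(intrD, intrM, natrM); ring.
Qed.

Hypothesis N_gt0 : forall i, (0 < N i)%N.
Hypothesis N_dvd_2n : forall i, (N i %| 2 * n i)%N.
Variable p : 'I_M -> 'I_M -> int.

Let N_neq0 i : (N i)%:R != 0 :> rat.
Proof. by rewrite pnatr_eq0 -lt0n. Qed.

Let gcdN_neq0 i j : (gcdn (N i) (N j))%:R != 0 :> rat.
Proof. by rewrite pnatr_eq0 -lt0n gcdn_gt0 N_gt0. Qed.

Definition upper_coef (k j : 'I_M) : rat :=
  if (k <= j)%N then (p k j)%:~R / (gcdn (N k) (N j))%:R else 0.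

Lemma lincomb_a_gen_c (y : 'I_M -> int) (k : 'I_M) :
  ((lincomb (a_gen N p) y).1 k)%:~R / (N k)%:R =
  \sum_(j < M) (y j)%:~R * upper_coef k j.
Proof.
rewrite /lincomb /a_gen /upper_coef /= rmorph_sum /= mulr_suml; apply: eq_bigr => j _.
case: leqP => _; last by rewrite !(mulr0, mul0r).
rewrite !intrM /= -pmulrn natf_div ?dvdn_gcdr // gcdnC; field; exact/andP.
Qed.

Lemma B_exp_abar (b : anyon M) (k : 'I_M) :
  B_exp N n b (abar_gen N n p k) =
  ((lincomb (a_gen N p) b.2).1 k - b.1 k)%:~R / (N k)%:R.
Proof.
rewrite B_expE intrB mulrBl lincomb_a_gen_c.
transitivity (\sum_(j < M) ((b.2 j)%:~R * upper_coef k j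
                            - (j == k)%:R * (b.1 j)%:~R / (N j)%:R)).
  apply: eq_bigr => j _; rewrite /abar_gen /upper_coef /=.
  have [->|neq_jk] := eqVneq j k.
    (* the phi_k.phibar_k contribution cancels the c_k^(2 n_k / N_k) one *)
    rewrite leqnn gcdnn divnn N_gt0 !(intrD, intrM, intrN) /= -!pmulrn natf_div //.
    by field.
  rewrite !(addr0, mulr0, mul0r, oppr0, subr0).
  case: leqP => _; rewrite ?(mulr0, addr0, mul0r) //.
  by rewrite add0r !intrM /= -pmulrn natf_div ?dvdn_gcdr //; field; exact/andP.
rewrite sumrB; congr (_ - _).
rewrite (bigD1 k) //= eqxx mul1r big1 ?addr0 //.
by move=> j /negPf ->; rewrite !mul0r.
Qed.

Lemma B_trivial_abarE (b : anyon M) (k : 'I_M) :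
  B_trivial N n b (abar_gen N n p k) <->
  (b.1 k = (lincomb (a_gen N p) b.2).1 k %[mod (N k)%:Z])%Z.
Proof.
rewrite /B_trivial B_exp_abar Qint_divn // -eqz_mod_dvd.
by rewrite eq_sym; split => /eqP.
Qed.

End Braiding.

Lemma prime_power_gt0 (N : nat) : prime_power N -> (0 < N)%N.
Proof. by case=> q [k [q_prime ->]]; rewrite expn_gt0 prime_gt0. Qed.

Lemma dvdn_double_nn M (N : 'I_M -> nat) (t : 'I_M -> rat) (i : 'I_M) :
  (if odd (N i) then t i \is a Num.int else 2 * t i \is a Num.int) ->
  (N i %| 2 * nn N t i)%N.
Proof.
move=> t_half_int; rewrite /nn; case: ifP => [_|t_nonint].
  by rewrite muln0 dvdn0.
move: t_half_int; case: ifP => [_|N_even _]; first by rewrite t_nonint.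
by rewrite mul2n even_halfK ?N_even.
Qed.

Theorem mainTheorem10 (M : nat) (N : 'I_M -> nat) (t : 'I_M -> rat)
  (p : 'I_M -> 'I_M -> int)
  (HN : forall i, prime_power (N i))
  (Ht : forall i, if odd (N i) then t i \is a Num.int else 2 * t i \is a Num.int)
  (Hpsym : forall i j, i != j -> p i j = p j i)
  (Hpdiag : forall i, p i i = Num.floor (t i)) :
  let n := nn N t in
  (forall i j, B_trivial N n (a_gen N p i) (abar_gen N n p j)) /\
  (forall b : anyon M, (forall j, B_trivial N n b (abar_gen N n p j)) ->
     in_subgroup N (a_gen N p) b).
Proof.
move=> n.
have N_gt0 i : (0 < N i)%N := prime_power_gt0 (HN i).
have N_dvd_2n i : (N i %| 2 * n i)%N := dvdn_double_nn (Ht i).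
split=> [i k | b b_trivial].
  by apply/B_trivial_abarE => //; rewrite lincomb_unit1.
exists b.2 => k; split; last by rewrite lincomb_a_gen2.
exact/B_trivial_abarE.
Qed.
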